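(* Consider the DC network $$-L_\alpha\dot I_\alpha=V_\alpha-u_\alpha\circ V_{s\alpha},\quad -L_\beta\dot I_\beta=(\mathbf 1_{n_\beta}-u_\beta)\circ V_\beta-V_{s\beta},\quad -L_l\dot I_l=D^\top V+R_lI_l,$$ $$C_\alpha\dot V_\alpha=I_\alpha-G_\alpha V_\alpha+D_\alpha I_l,\quad C_\beta\dot V_\beta=(\mathbf 1_{n_\beta}-u_\beta)\circ I_\beta-G_\beta V_\beta+D_\beta I_l,$$ extended by $\dot u=\upsilon$ where $u=(u_\alpha^\top,u_\beta^\top)^\top$. Let $I=(I_\alpha^\top,I_\beta^\top,I_l^\top)^\top$, $V=(V_\alpha^\top,V_\beta^\top)^\top$, $L=\mathrm{diag}(L_\alpha,L_\beta,L_l)$, $C=\mathrm{diag}(C_\alpha,C_\beta)$. Then the system is passive with respect to the storage function $S=\tfrac12\dot I^\top L\dot I+\tfrac12\dot V^\top C\dot V$ and the port-variables $\dot u$ and $$y_{\mathrm{DC}}=\begin{bmatrix}\dot I_\alpha\circ V_{s\alpha}\\ \dot I_\beta\circ V_\beta-\dot V_\beta\circ I_\beta\end{bmatrix},$$ i.e. $\dot S\le\dot u^\top y_{\mathrm{DC}}$.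
   Context: The network is a connected undirected graph with $n_\alpha$ buck-converter nodes, $n_\beta$ boost-converter nodes ($n=n_\alpha+n_\beta$) and $m$ lines; $D\in\mathbb{R}^{n\times m}$ is the incidence matrix (entry $+1$/$-1$ if node $i$ is the positive/negative end of line $k$, else $0$), and $D_\alpha\in\mathbb{R}^{n_\alpha\times m}$, $D_\beta\in\mathbb{R}^{n_\beta\times m}$ are its rows for buck and boost nodes. $I_\alpha,V_\alpha,V_{s\alpha},u_\alpha\in\mathbb{R}^{n_\alpha}$; $I_\beta,V_\beta,V_{s\beta},u_\beta\in\mathbb{R}^{n_\beta}$; $I_l\in\mathbb{R}^m$ line currents; $V_{s\alpha},V_{s\beta}$ constant sources; $L_\alpha,L_\beta,L_l,C_\alpha,C_\beta,R_l,G_\alpha,G_\beta$ are positive definite diagonal matrices. $\circ$ is the entrywise (Hadamard) product, $\mathbf 1_{n_\beta}$ the all-ones vector, $u\in[0,1]^n$ duty cycles. *)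

From HB Require Import structures.
From mathcomp Require Import all_boot all_order all_algebra.
From mathcomp Require Import all_classical all_reals all_analysis.
Set Implicit Arguments. Unset Strict Implicit. Unset Printing Implicit Defensive.
Import Order.TTheory GRing.Theory Num.Theory.
Local Open Scope ring_scope.

Section Defs.
Variable R : realType.

Definition dvec k (f : R -> 'cV[R]_k) : R -> 'cV[R]_k :=
  fun t => \col_i (derive1 (fun s => f s i ord0) t).

Definition vderivable k (f : R -> 'cV[R]_k) (t : R) : Prop :=
  forall i, derivable (fun s => f s i ord0) t 1.

Definition had k (a b : 'cV[R]_k) : 'cV[R]_k := \col_i (a i ord0 * b i ord0).

Definition pd_diag k (A : 'M[R]_k) : Prop :=
  exists d : 'rV[R]_k, A = diag_mx d /\ forall i, 0 < d ord0 i.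

Definition is_incidence n m (D : 'M[R]_(n, m)) : Prop :=
  forall k : 'I_m, exists i j : 'I_n,
    [/\ i != j, D i k = 1, D j k = -1 &
        forall l, l != i -> l != j -> D l k = 0].

Definition incidence_connected n m (D : 'M[R]_(n, m)) : Prop :=
  forall i j : 'I_n,
    connect (fun a b => [exists k, (D a k != 0) && (D b k != 0)]) i j.

End Defs.

From HB Require Import structures.
From mathcomp Require Import all_boot all_order all_algebra.
From mathcomp Require Import all_classical all_reals all_analysis.
From mathcomp Require Import ring.
Import Order.TTheory GRing.Theory Num.Theory.
Local Open Scope ring_scope.

(* Differentiating the dynamics once gives a network of the same form in the
   increments I' and V', driven by u'.  Hence S' = I'^T L I'' + V'^T C V'', and
   after substituting the differentiated equations the cross terms produced by
   the converters and by the line coupling through D cancel pairwise, leaving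
   S' = u'^T y_DC - (Il'^T Rl Il' + Va'^T Ga Va' + Vb'^T Gb Vb'). *)

Set Implicit Arguments. Unset Strict Implicit.

Section VectorDerivative.
Variable R : realType.
Implicit Types (k l : nat) (t : R).

Definition is_vderive k t (f : R -> 'cV[R]_k) (f' : 'cV[R]_k) : Prop :=
  forall i, is_derive t (1 : R) (fun s => f s i ord0) (f' i ord0).

Lemma vderivableP k t (f : R -> 'cV[R]_k) :
  vderivable f t -> is_vderive t f (dvec f t).
Proof. by move=> df i; rewrite mxE derive1E; apply: derivableP. Qed.

Lemma dvec_val k t (f : R -> 'cV[R]_k) f' : is_vderive t f f' -> dvec f t = f'.
Proof.
move=> df; apply/matrixP => i j; rewrite mxE (ord1 j) derive1E.
by have := df i => dfi; rewrite derive_val.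
Qed.

Lemma is_vderive_eqfun k t (f g : R -> 'cV[R]_k) f' g' :
  f =1 g -> is_vderive t f f' -> is_vderive t g g' -> f' = g'.
Proof. by move=> /funext-> df dg; rewrite -(dvec_val df) -(dvec_val dg). Qed.

Lemma dvec_col_mx k l t (f : R -> 'cV[R]_k) (g : R -> 'cV[R]_l) :
  dvec (fun s => col_mx (f s) (g s)) t = col_mx (dvec f t) (dvec g t).
Proof.
apply/matrixP => i j; case: (split_ordP i) => p ->.
  rewrite col_mxEu !mxE; congr derive1; apply/funext => s; exact: col_mxEu.
rewrite col_mxEd !mxE; congr derive1; apply/funext => s; exact: col_mxEd.
Qed.

Lemma is_vderive_col_mx k l t (f : R -> 'cV[R]_k) (g : R -> 'cV[R]_l) f' g' :
  is_vderive t f f' -> is_vderive t g g' ->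
  is_vderive t (fun s => col_mx (f s) (g s)) (col_mx f' g').
Proof.
move=> df dg i; case: (split_ordP i) => p ->.
  by under eq_fun do rewrite col_mxEu; rewrite col_mxEu.
by under eq_fun do rewrite col_mxEd; rewrite col_mxEd.
Qed.

Lemma is_vderive_cst k t (c : 'cV[R]_k) : is_vderive t (fun _ => c) 0.
Proof. by move=> i; rewrite mxE; apply: is_derive_cst. Qed.

Lemma is_vderiveD k t (f g : R -> 'cV[R]_k) f' g' :
  is_vderive t f f' -> is_vderive t g g' ->
  is_vderive t (fun s => f s + g s) (f' + g').
Proof.
move=> df dg i; under eq_fun do rewrite mxE.
by rewrite mxE; apply: is_deriveD.
Qed.

Lemma is_vderiveN k t (f : R -> 'cV[R]_k) f' :
  is_vderive t f f' -> is_vderive t (fun s => - f s) (- f').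
Proof.
move=> df i; under eq_fun do rewrite mxE.
by rewrite mxE; apply: is_deriveN.
Qed.

Lemma is_vderiveB k t (f g : R -> 'cV[R]_k) f' g' :
  is_vderive t f f' -> is_vderive t g g' ->
  is_vderive t (fun s => f s - g s) (f' - g').
Proof. by move=> df dg; apply: is_vderiveD => //; apply: is_vderiveN. Qed.

Lemma is_vderive_mulmx k l t (A : 'M[R]_(k, l)) (f : R -> 'cV[R]_l) f' :
  is_vderive t f f' -> is_vderive t (fun s => A *m f s) (A *m f').
Proof.
move=> df i; rewrite mxE.
have -> : (fun s => (A *m f s) i ord0) = \sum_j (A i j *: fun s => f s j ord0).
  by apply/funext => s; rewrite mxE fct_sumE.
by apply: is_derive_sum => j; apply: is_deriveZ.
Qed.

Lemma is_vderive_had k t (f g : R -> 'cV[R]_k) f' g' :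
  is_vderive t f f' -> is_vderive t g g' ->
  is_vderive t (fun s => had (f s) (g s)) (had f' (g t) + had (f t) g').
Proof.
move=> df dg i; under eq_fun do rewrite mxE.
apply: is_derive_eq; first exact: is_deriveM.
by rewrite !mxE addrC [f' i _ * _]mulrC.
Qed.

End VectorDerivative.

Section DotProduct.
Variable R : realType.
Implicit Types (k l : nat) (t : R).

Definition dot k (x y : 'cV[R]_k) : R := (x^T *m y) ord0 ord0.

Lemma dotE k (x y : 'cV[R]_k) : dot x y = \sum_i x i ord0 * y i ord0.
Proof. by rewrite /dot mxE; apply: eq_bigr => i _; rewrite mxE. Qed.

Lemma dotC k (x y : 'cV[R]_k) : dot x y = dot y x.
Proof. by rewrite !dotE; apply: eq_bigr => i _; rewrite mulrC. Qed.

Lemma dotDr k (x y z : 'cV[R]_k) : dot x (y + z) = dot x y + dot x z.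
Proof. by rewrite /dot mulmxDr mxE. Qed.

Lemma dotNr k (x y : 'cV[R]_k) : dot x (- y) = - dot x y.
Proof. by rewrite /dot mulmxN mxE. Qed.

Lemma dot_col_mx k l (x x' : 'cV[R]_k) (y y' : 'cV[R]_l) :
  dot (col_mx x y) (col_mx x' y') = dot x x' + dot y y'.
Proof. by rewrite /dot tr_col_mx mul_row_col mxE. Qed.

Lemma dot_trmx k l (A : 'M[R]_(k, l)) (x : 'cV[R]_l) (y : 'cV[R]_k) :
  dot x (A^T *m y) = dot y (A *m x).
Proof.
have trE (M : 'M[R]_1) : M ord0 ord0 = M^T ord0 ord0 by rewrite mxE.
by rewrite /dot trE !trmx_mul !trmxK mulmxA.
Qed.

Lemma mx_quadE k (A : 'M[R]_k) (x : 'cV[R]_k) :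
  (x^T *m A *m x) ord0 ord0 = dot x (A *m x).
Proof. by rewrite /dot mulmxA. Qed.

Lemma dot_block_diag k l (A : 'M[R]_k) (B : 'M[R]_l) x x' y y' :
  dot (col_mx x y) (block_mx A 0 0 B *m col_mx x' y') =
  dot x (A *m x') + dot y (B *m y').
Proof. by rewrite mul_block_col !mul0mx addr0 add0r dot_col_mx. Qed.

Lemma hadC k (x y : 'cV[R]_k) : had x y = had y x.
Proof. by apply/matrixP => i j; rewrite !mxE mulrC. Qed.

Lemma hadNl k (x y : 'cV[R]_k) : had (- x) y = - had x y.
Proof. by apply/matrixP => i j; rewrite !mxE mulNr. Qed.

Lemma had0r k (x : 'cV[R]_k) : had x 0 = 0.
Proof. by apply/matrixP => i j; rewrite !mxE mulr0. Qed.

Lemma dot_hadCA k (x y z : 'cV[R]_k) : dot x (had y z) = dot y (had x z).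
Proof. by rewrite !dotE; apply: eq_bigr => i _; rewrite !mxE mulrCA. Qed.

Lemma pd_diag_sym k (A : 'M[R]_k) : pd_diag A -> A^T = A.
Proof. by case=> d [-> _]; rewrite tr_diag_mx. Qed.

Lemma pd_diag_psd k (A : 'M[R]_k) x : pd_diag A -> 0 <= dot x (A *m x).
Proof.
case=> d [-> d_gt0]; rewrite dotE; apply: sumr_ge0 => i _.
rewrite mul_diag_mx mxE mulrCA -expr2.
by apply: mulr_ge0; [exact: ltW | exact: sqr_ge0].
Qed.

Lemma is_derive_dot k t (f g : R -> 'cV[R]_k) f' g' :
  is_vderive t f f' -> is_vderive t g g' ->
  is_derive t (1 : R) (fun s => dot (f s) (g s)) (dot f' (g t) + dot (f t) g').
Proof.
move=> df dg.
have -> : (fun s => dot (f s) (g s)) =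
          \sum_i ((fun s => f s i ord0) * (fun s => g s i ord0)).
  by apply/funext => s; rewrite dotE fct_sumE.
apply: is_derive_eq; first by apply: is_derive_sum => i; apply: is_deriveM.
rewrite !dotE -big_split; apply: eq_bigr => i _.
by rewrite /GRing.scale /= addrC [g t i _ * _]mulrC mulrC.
Qed.

Lemma is_derive_quad k t (A : 'M[R]_k) (f : R -> 'cV[R]_k) f' :
  A^T = A -> is_vderive t f f' ->
  is_derive t (1 : R) (fun s => dot (f s) (A *m f s)) (2 * dot (f t) (A *m f')).
Proof.
move=> symA df; apply: is_derive_eq (is_derive_dot df (is_vderive_mulmx A df)) _.
by rewrite -[in dot f' _]symA dot_trmx mulr2n mulrDl mul1r.
Qed.

End DotProduct.

Section DifferentiatedNetwork.
Variables (R : realType) (na nb m : nat) (D : 'M[R]_(na + nb, m)).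
Variables (La Ca Ga : 'M[R]_na) (Lb Cb Gb : 'M[R]_nb) (Ll Rl : 'M[R]_m).
Variables (Vsa : 'cV[R]_na) (Vsb : 'cV[R]_nb).
Variables (Ia Va ua : R -> 'cV[R]_na) (Ib Vb ub : R -> 'cV[R]_nb).
Variables (Il : R -> 'cV[R]_m) (t : R).

Hypotheses (dua : vderivable ua t) (dub : vderivable ub t).
Hypotheses (dIa : vderivable Ia t) (dIb : vderivable Ib t) (dIl : vderivable Il t).
Hypotheses (dVa : vderivable Va t) (dVb : vderivable Vb t).
Hypotheses (ddIa : vderivable (dvec Ia) t) (ddIb : vderivable (dvec Ib) t).
Hypotheses (ddIl : vderivable (dvec Il) t).
Hypotheses (ddVa : vderivable (dvec Va) t) (ddVb : vderivable (dvec Vb) t).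

Hypothesis dynIa : forall s, - (La *m dvec Ia s) = Va s - had (ua s) Vsa.
Hypothesis dynIb :
  forall s, - (Lb *m dvec Ib s) = had (const_mx 1 - ub s) (Vb s) - Vsb.
Hypothesis dynIl :
  forall s, - (Ll *m dvec Il s) = D^T *m col_mx (Va s) (Vb s) + Rl *m Il s.
Hypothesis dynVa :
  forall s, Ca *m dvec Va s = Ia s - Ga *m Va s + usubmx D *m Il s.
Hypothesis dynVb : forall s, Cb *m dvec Vb s =
  had (const_mx 1 - ub s) (Ib s) - Gb *m Vb s + dsubmx D *m Il s.

Lemma La_ddIaE : La *m dvec (dvec Ia) t = had (dvec ua t) Vsa - dvec Va t.
Proof.
apply: oppr_inj.
rewrite (is_vderive_eqfun dynIa (is_vderiveN (is_vderive_mulmx La (vderivableP ddIa)))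
  (is_vderiveB (vderivableP dVa) (is_vderive_had (vderivableP dua) (is_vderive_cst _ _)))).
by rewrite had0r addr0 opprB.
Qed.

Lemma Lb_ddIbE : Lb *m dvec (dvec Ib) t =
  had (dvec ub t) (Vb t) - had (const_mx 1 - ub t) (dvec Vb t).
Proof.
apply: oppr_inj.
rewrite (is_vderive_eqfun dynIb (is_vderiveN (is_vderive_mulmx Lb (vderivableP ddIb)))
  (is_vderiveB (is_vderive_had (is_vderiveB (is_vderive_cst _ _) (vderivableP dub))
     (vderivableP dVb)) (is_vderive_cst _ _))).
by rewrite sub0r hadNl subr0 opprB addrC.
Qed.

Lemma Ll_ddIlE : Ll *m dvec (dvec Il) t =
  - (D^T *m col_mx (dvec Va t) (dvec Vb t) + Rl *m dvec Il t).
Proof.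
apply: oppr_inj; rewrite opprK.
exact: (is_vderive_eqfun dynIl (is_vderiveN (is_vderive_mulmx Ll (vderivableP ddIl)))
  (is_vderiveD (is_vderive_mulmx D^T
     (is_vderive_col_mx (vderivableP dVa) (vderivableP dVb)))
   (is_vderive_mulmx Rl (vderivableP dIl)))).
Qed.

Lemma Ca_ddVaE : Ca *m dvec (dvec Va) t =
  dvec Ia t - Ga *m dvec Va t + usubmx D *m dvec Il t.
Proof.
exact: (is_vderive_eqfun dynVa (is_vderive_mulmx Ca (vderivableP ddVa))
  (is_vderiveD (is_vderiveB (vderivableP dIa) (is_vderive_mulmx Ga (vderivableP dVa)))
     (is_vderive_mulmx (usubmx D) (vderivableP dIl)))).
Qed.

Lemma Cb_ddVbE : Cb *m dvec (dvec Vb) t =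
  had (const_mx 1 - ub t) (dvec Ib t) - had (dvec ub t) (Ib t)
  - Gb *m dvec Vb t + dsubmx D *m dvec Il t.
Proof.
rewrite (is_vderive_eqfun dynVb (is_vderive_mulmx Cb (vderivableP ddVb))
  (is_vderiveD (is_vderiveB (is_vderive_had
       (is_vderiveB (is_vderive_cst _ _) (vderivableP dub)) (vderivableP dIb))
     (is_vderive_mulmx Gb (vderivableP dVb)))
   (is_vderive_mulmx (dsubmx D) (vderivableP dIl)))).
by rewrite sub0r hadNl [_ + had _ _]addrC.
Qed.

Lemma power_balance :
  dot (dvec Ia t) (La *m dvec (dvec Ia) t) + dot (dvec Ib t) (Lb *m dvec (dvec Ib) t)
  + dot (dvec Il t) (Ll *m dvec (dvec Il) t)
  + dot (dvec Va t) (Ca *m dvec (dvec Va) t) + dot (dvec Vb t) (Cb *m dvec (dvec Vb) t)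
  = dot (dvec ua t) (had (dvec Ia t) Vsa)
    + dot (dvec ub t) (had (dvec Ib t) (Vb t) - had (dvec Vb t) (Ib t))
    - (dot (dvec Il t) (Rl *m dvec Il t) + dot (dvec Va t) (Ga *m dvec Va t)
       + dot (dvec Vb t) (Gb *m dvec Vb t)).
Proof.
rewrite La_ddIaE Lb_ddIbE Ll_ddIlE Ca_ddVaE Cb_ddVbE !(dotDr, dotNr).
rewrite [dot (dvec Ia t) (had _ _)]dot_hadCA [dot (dvec Ib t) (had (dvec ub t) _)]dot_hadCA.
rewrite [dot (dvec Vb t) (had (dvec ub t) _)]dot_hadCA.
rewrite [dot (dvec Ib t) (had _ _)]dot_hadCA [dot (dvec Vb t) (had _ _)]dot_hadCA [had (dvec Vb t) _]hadC.
rewrite dot_trmx -[D]vsubmxK mul_col_mx dot_col_mx col_mxKu col_mxKd.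
rewrite [dot (dvec Ia t) _]dotC.
ring.
Qed.

End DifferentiatedNetwork.
Theorem lemma4 (R : realType) (na nb m : nat)
  (D : 'M[R]_(na + nb, m))
  (La Ca Ga : 'M[R]_na) (Lb Cb Gb : 'M[R]_nb) (Ll Rl : 'M[R]_m)
  (Vsa : 'cV[R]_na) (Vsb : 'cV[R]_nb)
  (Ia Va ua : R -> 'cV[R]_na) (Ib Vb ub : R -> 'cV[R]_nb) (Il : R -> 'cV[R]_m) :
  is_incidence D -> incidence_connected D ->
  pd_diag La -> pd_diag Lb -> pd_diag Ll -> pd_diag Ca -> pd_diag Cb ->
  pd_diag Rl -> pd_diag Ga -> pd_diag Gb ->
  (* duty cycles in [0,1] *)
  (forall t i, 0 <= ua t i ord0 <= 1) -> (forall t i, 0 <= ub t i ord0 <= 1) ->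
  (* regularity of the trajectory *)
  (forall t, vderivable ua t) -> (forall t, vderivable ub t) ->
  (forall t, vderivable Ia t) -> (forall t, vderivable Ib t) ->
  (forall t, vderivable Il t) ->
  (forall t, vderivable Va t) -> (forall t, vderivable Vb t) ->
  (forall t, vderivable (dvec Ia) t) -> (forall t, vderivable (dvec Ib) t) ->
  (forall t, vderivable (dvec Il) t) ->
  (forall t, vderivable (dvec Va) t) -> (forall t, vderivable (dvec Vb) t) ->
  (* DC network dynamics *)
  (forall t, - (La *m dvec Ia t) = Va t - had (ua t) Vsa) ->
  (forall t, - (Lb *m dvec Ib t) = had (const_mx 1 - ub t) (Vb t) - Vsb) ->
  (forall t, - (Ll *m dvec Il t) = D^T *m col_mx (Va t) (Vb t) + Rl *m Il t) ->
  (forall t, Ca *m dvec Va t = Ia t - Ga *m Va t + usubmx D *m Il t) ->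
  (forall t, Cb *m dvec Vb t =
             had (const_mx 1 - ub t) (Ib t) - Gb *m Vb t + dsubmx D *m Il t) ->
  let I := fun t => col_mx (col_mx (Ia t) (Ib t)) (Il t) in
  let V := fun t => col_mx (Va t) (Vb t) in
  let u := fun t => col_mx (ua t) (ub t) in
  let L := block_mx (block_mx La 0 0 Lb) 0 0 Ll in
  let C := block_mx Ca 0 0 Cb in
  let S := fun t => 2^-1 * ((dvec I t)^T *m L *m dvec I t) ord0 ord0
                  + 2^-1 * ((dvec V t)^T *m C *m dvec V t) ord0 ord0 in
  let y := fun t => col_mx (had (dvec Ia t) Vsa)
                           (had (dvec Ib t) (Vb t) - had (dvec Vb t) (Ib t)) in
  forall t, derivable S t 1 /\ derive1 S t <= ((dvec u t)^T *m y t) ord0 ord0.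
Proof.
move=> _ _ pLa pLb pLl pCa pCb pRl pGa pGb _ _ dua dub dIa dIb dIl dVa dVb
  ddIa ddIb ddIl ddVa ddVb dynIa dynIb dynIl dynVa dynVb I V u L C S y t.
pose ddI := col_mx (col_mx (dvec (dvec Ia) t) (dvec (dvec Ib) t)) (dvec (dvec Il) t).
pose ddV := col_mx (dvec (dvec Va) t) (dvec (dvec Vb) t).
have dI : is_vderive t (dvec I) ddI.
  have -> : dvec I = fun s => col_mx (col_mx (dvec Ia s) (dvec Ib s)) (dvec Il s).
    by apply/funext => s; rewrite !dvec_col_mx.
  by do 2?apply: is_vderive_col_mx; apply: vderivableP.
have dV : is_vderive t (dvec V) ddV.
  have -> : dvec V = fun s => col_mx (dvec Va s) (dvec Vb s).
    by apply/funext => s; rewrite dvec_col_mx.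
  by apply: is_vderive_col_mx; apply: vderivableP.
have symL : L^T = L by rewrite !tr_block_mx !trmx0 !pd_diag_sym.
have symC : C^T = C by rewrite tr_block_mx !trmx0 !pd_diag_sym.
have dS : is_derive t 1 S (dot (dvec I t) (L *m ddI) + dot (dvec V t) (C *m ddV)).
  apply: is_derive_eq.
    rewrite /S; under eq_fun do rewrite !mx_quadE.
    by apply: is_deriveD; apply: is_deriveZ; apply: is_derive_quad.
  by rewrite /GRing.scale /= !mulKf ?pnatr_eq0.
split; first by apply: ex_derive; exact: dS.
rewrite derive1E derive_val /I /V /ddI /ddV !dvec_col_mx !dot_block_diag.
rewrite -[X in _ <= X]/(dot _ _) dot_col_mx.
rewrite addrA (power_balance (dua t) (dub t) (dIa t) (dIb t) (dIl t) (dVa t)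
  (dVb t) (ddIa t) (ddIb t) (ddIl t) (ddVa t) (ddVb t) dynIa dynIb dynIl dynVa dynVb).
by rewrite gerBl !addr_ge0 // pd_diag_psd.
Qed.
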